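(* Let $Y$ be a locally compact sober space, let $\mu\colon Y\to[0,1]$ be such that $\mu^{-1}([0,a))$ is open in $Y$ for every $a\in[0,1]$, and let $X=\mu^{-1}(\{0\})$ with the subspace topology. For a non-empty compact saturated $Q\subseteq Y$ let $r(Q)=\max\{\mu(y)\mid y\in Q\}$ (which exists). Then: (a) for every filtered family $(Q_i)_{i\in I}$ of non-empty compact saturated subsets of $Y$ with $\inf_{i\in I} r(Q_i)=0$, the intersection $\bigcap_{i\in I}Q_i$ is a non-empty compact saturated subset of $X$; (b) conversely, every non-empty compact saturated subset $Q$ of $X$ is of the form $Q=\bigcap_{i\in I}Q_i=\bigcap_{i\in I}\mathrm{int}(Q_i)$ for some filtered family $(Q_i)_{i\in I}$ of non-empty compact saturated subsets of $Y$ with $\inf_{i\in I}r(Q_i)=0$, where $\mathrm{int}$ denotes interior in $Y$; and when $Y$ is a continuous dcpo with its Scott topology, the $Q_i$ can be chosen of the form ${\uparrow}A_i$ with $A_i$ a non-empty finite subset of $Y$.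
   Context: Compactness does not presuppose separation; a saturated set is one that is upward closed in the specialization preorder. A family is filtered if any two members contain a third member. ${\uparrow}A$ is the upward closure of $A$. Every LCS-complete space (a $G_\delta$ subset of a locally compact sober space) arises as such an $X$ for suitable $Y,\mu$. *)

From Stdlib Require Import Reals List Classical ClassicalEpsilon.
Open Scope R_scope.

Section Topology.
Context {A : Type}.

Definition is_topology (O : (A -> Prop) -> Prop) : Prop :=
  O (fun _ => True) /\
  (forall U V, O U -> O V -> O (fun x => U x /\ V x)) /\
  (forall F : (A -> Prop) -> Prop, (forall U, F U -> O U) ->
     O (fun x => exists U, F U /\ U x)).

Definition subset (P Q : A -> Prop) : Prop := forall x, P x -> Q x.

Definition tclosed (O : (A -> Prop) -> Prop) (C : A -> Prop) : Prop :=
  O (fun x => ~ C x).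

Definition tclosure (O : (A -> Prop) -> Prop) (S : A -> Prop) (y : A) : Prop :=
  forall C, tclosed O C -> subset S C -> C y.

Definition tinterior (O : (A -> Prop) -> Prop) (S : A -> Prop) (y : A) : Prop :=
  exists U, O U /\ subset U S /\ U y.

Definition spec_le (O : (A -> Prop) -> Prop) (x y : A) : Prop :=
  forall U, O U -> U x -> U y.

Definition saturated (O : (A -> Prop) -> Prop) (Q : A -> Prop) : Prop :=
  forall x y, Q x -> spec_le O x y -> Q y.

Definition compactset (O : (A -> Prop) -> Prop) (Q : A -> Prop) : Prop :=
  forall F : (A -> Prop) -> Prop, (forall U, F U -> O U) ->
    (forall x, Q x -> exists U, F U /\ U x) ->
    exists l : list (A -> Prop), (forall U, In U l -> F U) /\
      (forall x, Q x -> exists U, In U l /\ U x).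

Definition nonempty (Q : A -> Prop) : Prop := exists x, Q x.

Definition irreducible_closed (O : (A -> Prop) -> Prop) (C : A -> Prop) : Prop :=
  tclosed O C /\ nonempty C /\
  forall C1 C2, tclosed O C1 -> tclosed O C2 ->
    (forall y, C y -> C1 y \/ C2 y) -> subset C C1 \/ subset C C2.

Definition sober (O : (A -> Prop) -> Prop) : Prop :=
  forall C, irreducible_closed O C ->
    exists! x, forall y, C y <-> tclosure O (fun z => z = x) y.

Definition locally_compact (O : (A -> Prop) -> Prop) : Prop :=
  forall x U, O U -> U x ->
    exists V Q, O V /\ V x /\ subset V Q /\ subset Q U /\ compactset O Q.

Definition directed (le : A -> A -> Prop) (D : A -> Prop) : Prop :=
  nonempty D /\ forall x y, D x -> D y -> exists z, D z /\ le x z /\ le y z.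

Definition is_sup (le : A -> A -> Prop) (D : A -> Prop) (s : A) : Prop :=
  (forall d, D d -> le d s) /\ (forall u, (forall d, D d -> le d u) -> le s u).

Definition is_dcpo (le : A -> A -> Prop) : Prop :=
  (forall x, le x x) /\ (forall x y z, le x y -> le y z -> le x z) /\
  (forall x y, le x y -> le y x -> x = y) /\
  (forall D, directed le D -> exists s, is_sup le D s).

Definition way_below (le : A -> A -> Prop) (x y : A) : Prop :=
  forall D s, directed le D -> is_sup le D s -> le y s -> exists d, D d /\ le x d.

Definition continuous_dcpo (le : A -> A -> Prop) : Prop :=
  is_dcpo le /\
  forall y, directed le (fun x => way_below le x y) /\
            is_sup le (fun x => way_below le x y) y.

Definition scott_open (le : A -> A -> Prop) (U : A -> Prop) : Prop :=
  (forall x y, U x -> le x y -> U y) /\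
  (forall D s, directed le D -> is_sup le D s -> U s -> exists d, D d /\ U d).

Definition upset (le : A -> A -> Prop) (l : list A) (y : A) : Prop :=
  exists a, In a l /\ le a y.

End Topology.

Definition subspace_top {A : Type} (O : (A -> Prop) -> Prop) (P : A -> Prop)
  : ({y : A | P y} -> Prop) -> Prop :=
  fun W => exists U, O U /\ forall x, W x <-> U (proj1_sig x).

Definition filtered {I A : Type} (Q : I -> A -> Prop) : Prop :=
  inhabited I /\ forall i j, exists k, subset (Q k) (Q i) /\ subset (Q k) (Q j).

Definition is_max_on {A : Type} (mu : A -> R) (Q : A -> Prop) (m : R) : Prop :=
  (exists y, Q y /\ mu y = m) /\ (forall y, Q y -> mu y <= m).

(* r(Q) = max { mu y | y in Q } (chosen by Hilbert's epsilon; meaningful when it exists) *)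
Definition rmax {A : Type} (mu : A -> R) (Q : A -> Prop) : R :=
  epsilon (inhabits 0) (is_max_on mu Q).

Definition is_inf_fam {I : Type} (f : I -> R) (m : R) : Prop :=
  (forall i, m <= f i) /\ (forall e, e > 0 -> exists i, f i < m + e).

(* Sober spaces are well-filtered, so a filtered intersection of non-empty compact
   saturated sets is non-empty, compact and saturated; if [r(Q_i)] tends to [0],
   every point of it has [mu = 0], and compactness passes to the subspace [X].
   Conversely, the image [S] of a compact saturated [Q] of [X] is compact saturated
   in [Y].  Its compact saturated neighbourhoods (in a continuous dcpo, the sets
   [upset A] with [S] inside their interior, obtained by interpolating with the
   way-below relation) form a filtered family cofinal among the open sets
   containing [S], by local compactness.  As [S] is saturated it is the
   intersection of its open neighbourhoods, hence of the family and of the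
   interiors of its members; and [r(Q_i) -> 0] because the open sets [mu < a]
   contain [S]. *)

From Stdlib Require Import Reals List Classical ClassicalEpsilon Lra
  FunctionalExtensionality PropExtensionality.
From mathcomp Require classical_sets.
Open Scope R_scope.

Lemma zorn_union_closed {T : Type} (P : (T -> Prop) -> Prop) :
  (forall F : (T -> Prop) -> Prop, (forall X, F X -> P X) ->
     (forall X Z, F X -> F Z -> subset X Z \/ subset Z X) ->
     P (fun t => exists X, F X /\ X t)) ->
  exists A, P A /\ forall B, P B -> subset A B -> subset B A.
Proof.
  intros Hchain.
  destruct (@classical_sets.Zorn_bigcup T P) as [A [PA Amax]].
  - intros F FP Ftot.
    replace (classical_sets.bigcup F (fun X => X)) with (fun t => exists X, F X /\ X t).
    + apply Hchain; [exact FP|]. intros X Z FX FZ. exact (Ftot X Z FX FZ).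
    + apply functional_extensionality; intros t; apply propositional_extensionality.
      split; [intros [X [FX Xt]]; exists X; assumption|intros [X FX Xt]; exists X; split; assumption].
  - exists A. split; [exact PA|]. intros B PB AB t Bt. apply NNPP. intros nAt.
    apply (Amax B); [split; [exact AB|intros BA; exact (nAt (BA t Bt))]|exact PB].
Qed.

Lemma list_choice {A B : Type} (R : A -> B -> Prop) (l : list A) :
  (forall a, In a l -> exists b, R a b) ->
  exists l' : list B, (forall b, In b l' -> exists a, In a l /\ R a b) /\
                      (forall a, In a l -> exists b, In b l' /\ R a b).
Proof.
  induction l as [|a l IH]; intros H.
  - exists nil. split; intros ? [].
  - destruct (H a (or_introl eq_refl)) as [b Hb].
    destruct IH as [l' [H1 H2]]; [intros a' Ha'; apply H; right; exact Ha'|].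
    exists (b :: l'). split.
    + intros b' [<-|Hb'].
      * exists a. split; [left; reflexivity|exact Hb].
      * destruct (H1 b' Hb') as [a' [Ha' R']]. exists a'. split; [right; exact Ha'|exact R'].
    + intros a' [<-|Ha'].
      * exists b. split; [left; reflexivity|exact Hb].
      * destruct (H2 a' Ha') as [b' [Hb' R']]. exists b'. split; [right; exact Hb'|exact R'].
Qed.

Lemma directed_list_bound {Y : Type} (F : (Y -> Prop) -> Prop) (l : list (Y -> Prop)) :
  directed subset F -> (forall W, In W l -> F W) ->
  exists V, F V /\ forall W, In W l -> subset W V.
Proof.
  intros [[V0 FV0] Hdir]. induction l as [|W l IH]; intros Hl.
  - exists V0. split; [exact FV0|intros ? []].
  - destruct IH as [V [FV HV]]; [intros W' HW'; apply Hl; right; exact HW'|].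
    destruct (Hdir W V (Hl W (or_introl eq_refl)) FV) as [Z [FZ [WZ VZ]]].
    exists Z. split; [exact FZ|].
    intros W' [<-|HW'] y Hy; [apply WZ, Hy|apply VZ, (HV W' HW'), Hy].
Qed.

Section OpenSets.
Context {Y : Type} (OY : (Y -> Prop) -> Prop) (Ht : is_topology OY).

Lemma open_ext U V : OY U -> (forall x, U x <-> V x) -> OY V.
Proof.
  intros HU H. replace V with U; [exact HU|].
  apply functional_extensionality. intros x. apply propositional_extensionality. apply H.
Qed.

Lemma open_full : OY (fun _ => True).
Proof. apply Ht. Qed.

Lemma open_inter U V : OY U -> OY V -> OY (fun x => U x /\ V x).
Proof. apply Ht. Qed.

Lemma open_union (F : (Y -> Prop) -> Prop) :
  (forall U, F U -> OY U) -> OY (fun x => exists U, F U /\ U x).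
Proof. apply Ht. Qed.

Lemma open_empty : OY (fun _ => False).
Proof.
  apply (open_ext (fun x => exists U, (fun _ : Y -> Prop => False) U /\ U x)).
  - apply open_union. intros U [].
  - intros x. split; [intros [U [[] _]]|intros []].
Qed.

Lemma open_union2 U V : OY U -> OY V -> OY (fun x => U x \/ V x).
Proof.
  intros HU HV.
  apply (open_ext (fun x => exists W, (W = U \/ W = V) /\ W x)).
  - apply open_union. intros W [->| ->]; assumption.
  - intros x. split.
    + intros [W [[->| ->] Hx]]; [left|right]; exact Hx.
    + intros [Hx|Hx]; [exists U|exists V]; split; auto.
Qed.

Lemma open_tinterior K : OY (tinterior OY K).
Proof.
  apply (open_ext (fun x => exists U, (OY U /\ subset U K) /\ U x)).
  - apply open_union. intros U [H _]. exact H.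
  - intros x. split; [intros [U [[H1 H2] H3]]|intros [U [H1 [H2 H3]]]]; exists U; auto.
Qed.

Lemma tinterior_subset K : subset (tinterior OY K) K.
Proof. intros y [U [_ [H1 H2]]]. apply H1, H2. Qed.

Lemma tclosed_compl_open V : OY V -> tclosed OY (fun x => ~ V x).
Proof. intros HV. apply (open_ext V _ HV). intros x. split; [tauto|apply NNPP]. Qed.

Lemma spec_le_trans x y z : spec_le OY x y -> spec_le OY y z -> spec_le OY x z.
Proof. intros H1 H2 U HU Hx. apply (H2 U HU), (H1 U HU Hx). Qed.

Lemma saturated_open_separation S y :
  saturated OY S -> ~ S y -> exists V, OY V /\ subset S V /\ ~ V y.
Proof.
  intros HS nSy. exists (fun x => exists V, (OY V /\ ~ V y) /\ V x). split; [|split].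
  - apply open_union. intros V [HV _]. exact HV.
  - intros x Sx. apply NNPP. intros Hno. apply nSy, (HS x y Sx).
    intros V HV Vx. apply NNPP. intros nVy. apply Hno. exists V. auto.
  - intros [V [[_ nVy] Vy]]. exact (nVy Vy).
Qed.

Lemma compact_directed_union Q F :
  compactset OY Q -> (forall V, F V -> OY V) -> directed subset F ->
  subset Q (fun y => exists V, F V /\ V y) -> exists V, F V /\ subset Q V.
Proof.
  intros HQ HF Hdir Hcov.
  destruct (HQ F HF Hcov) as [l [Hl Hlcov]].
  destruct (directed_list_bound F l Hdir Hl) as [V [FV HV]].
  exists V. split; [exact FV|]. intros y Qy.
  destruct (Hlcov y Qy) as [W [HW Wy]]. apply (HV W HW), Wy.
Qed.

Lemma compact_upclosure K :
  compactset OY K -> compactset OY (fun y => exists x, K x /\ spec_le OY x y).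
Proof.
  intros HK F HF Hc.
  destruct (HK F HF) as [l [H1 H2]].
  { intros x Kx. apply Hc. exists x. split; [exact Kx|intros U _ H; exact H]. }
  exists l. split; [exact H1|].
  intros y [x [Kx Hxy]]. destruct (H2 x Kx) as [U [HU Ux]].
  exists U. split; [exact HU|]. apply Hxy; [apply HF, H1, HU|exact Ux].
Qed.

Lemma compact_list_union (lK : list (Y -> Prop)) :
  (forall K, In K lK -> compactset OY K) ->
  compactset OY (fun y => exists K, In K lK /\ K y).
Proof.
  induction lK as [|K lK IH]; intros H F HF Hc.
  - exists nil. split; [intros ? []|intros x [K [[] _]]].
  - destruct (H K (or_introl eq_refl) F HF) as [l1 [A1 B1]].
    { intros x Kx. apply Hc. exists K. split; [left; reflexivity|exact Kx]. }
    destruct (IH (fun K' H' => H K' (or_intror H')) F HF) as [l2 [A2 B2]].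
    { intros x [K' [HK' Kx]]. apply Hc. exists K'. split; [right; exact HK'|exact Kx]. }
    exists (l1 ++ l2). split.
    + intros U HU. apply in_app_or in HU. destruct HU; auto.
    + intros x [K' [[<-|HK'] Kx]].
      * destruct (B1 x Kx) as [U [HU Ux]].
        exists U. split; [apply in_or_app; left; exact HU|exact Ux].
      * destruct (B2 x (ex_intro _ K' (conj HK' Kx))) as [U [HU Ux]].
        exists U. split; [apply in_or_app; right; exact HU|exact Ux].
Qed.

Lemma generic_point_above C x z :
  (forall y, C y <-> tclosure OY (fun w => w = x) y) -> C z -> spec_le OY z x.
Proof.
  intros Hx Cz W HW Wz. apply NNPP. intros nWx.
  apply (proj1 (Hx z) Cz (fun t => ~ W t)); [apply tclosed_compl_open, HW| |exact Wz].
  intros t ->. exact nWx.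
Qed.

End OpenSets.
Section WellFiltered.
Context {Y : Type} (OY : (Y -> Prop) -> Prop) (Ht : is_topology OY) (Hsob : sober OY).
Variables (I : Type) (Q : I -> Y -> Prop).
Hypotheses (HQfil : filtered Q) (HQc : forall i, compactset OY (Q i))
  (HQs : forall i, saturated OY (Q i)).

Section Avoiding.
Variable U : Y -> Prop.
Hypotheses (HU : OY U) (HQU : forall i, ~ subset (Q i) U).

Definition avoiding (V : Y -> Prop) : Prop :=
  OY V /\ forall i, ~ subset (Q i) (fun y => U y \/ V y).

Lemma avoiding_chain_union F :
  (forall V, F V -> avoiding V) ->
  (forall V W, F V -> F W -> subset V W \/ subset W V) ->
  avoiding (fun y => exists V, F V /\ V y).
Proof.
  intros FA Ftot. split; [apply open_union; auto; intros V FV; apply FA, FV|].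
  intros i Hi. destruct (classic (exists V, F V)) as [[V0 FV0]|Fempty].
  - set (G := fun W => exists V, F V /\ forall y, W y <-> U y \/ V y).
    assert (HG : directed subset G).
    { split; [exists (fun y => U y \/ V0 y); exists V0; split; [exact FV0|tauto]|].
      intros W1 W2 [V1 [FV1 HW1]] [V2 [FV2 HW2]].
      destruct (Ftot V1 V2 FV1 FV2) as [S12|S21].
      - exists W2. split; [exists V2; auto|split; [|intros y; tauto]].
        intros y Hy. apply HW2. destruct (proj1 (HW1 y) Hy); [left|right; apply S12]; auto.
      - exists W1. split; [exists V1; auto|split; [intros y; tauto|]].
        intros y Hy. apply HW1. destruct (proj1 (HW2 y) Hy); [left|right; apply S21]; auto. }
    destruct (compact_directed_union OY (Q i) G (HQc i)) as [W [[V [FV HW]] QW]].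
    + intros W [V [FV HW]]. apply (open_ext OY (fun y => U y \/ V y)); [|firstorder].
      apply open_union2; [exact Ht|exact HU|apply FA, FV].
    + exact HG.
    + intros y Qy. destruct (Hi y Qy) as [Uy|[V [FV Vy]]].
      * exists (fun y => U y \/ V0 y). split; [exists V0; split; [exact FV0|tauto]|left; exact Uy].
      * exists (fun y => U y \/ V y). split; [exists V; split; [exact FV|tauto]|right; exact Vy].
    + apply (proj2 (FA V FV) i). intros y Qy. apply HW, QW, Qy.
  - apply (HQU i). intros y Qy. destruct (Hi y Qy) as [Uy|[V [FV _]]]; [exact Uy|].
    destruct Fempty. exists V. exact FV.
Qed.

Section Maximal.
Variable A : Y -> Prop.
Hypotheses (HA : avoiding A) (Amax : forall B, avoiding B -> subset A B -> subset B A).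

Lemma maximal_avoiding_enlarged V :
  OY V -> ~ subset V A -> exists i, subset (Q i) (fun y => U y \/ A y \/ V y).
Proof.
  intros HV nVA. apply NNPP. intros Hno. apply nVA.
  assert (HAV : avoiding (fun y => A y \/ V y)).
  { split; [apply open_union2; [exact Ht|apply HA|exact HV]|].
    intros i Hi. apply Hno. exists i. exact Hi. }
  intros y Vy. apply (Amax _ HAV); [intros t At; left; exact At|right; exact Vy].
Qed.

Lemma maximal_avoiding_contains : subset U A.
Proof.
  intros y Uy. destruct (classic (A y)) as [Ay|nAy]; [exact Ay|exfalso].
  destruct (maximal_avoiding_enlarged U HU) as [i Hi].
  - intros HUA. exact (nAy (HUA y Uy)).
  - apply (proj2 HA i). intros x Qx. destruct (Hi x Qx) as [H|[H|H]]; tauto.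
Qed.

Lemma maximal_avoiding_meets i : exists z, Q i z /\ ~ A z.
Proof.
  apply NNPP. intros Hno. apply (proj2 HA i). intros z Qz. right.
  apply NNPP. intros nAz. apply Hno. exists z. auto.
Qed.

Lemma maximal_avoiding_compl_irreducible : irreducible_closed OY (fun y => ~ A y).
Proof.
  destruct HQfil as [[i0] Hfil].
  split; [apply tclosed_compl_open, HA|split].
  - destruct (maximal_avoiding_meets i0) as [z [_ nAz]]. exists z. exact nAz.
  - intros C1 C2 HC1 HC2 Hcov. apply NNPP. intros Hn.
    assert (Hout : forall C, tclosed OY C -> ~ subset (fun y => ~ A y) C ->
                   exists i, subset (Q i) (fun y => U y \/ A y \/ ~ C y)).
    { intros C HC nC. apply maximal_avoiding_enlarged; [exact HC|].
      intros HCA. apply nC. intros y nAy. apply NNPP. intros nCy. exact (nAy (HCA y nCy)). }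
    destruct (Hout C1 HC1) as [i Hi]; [intros H; apply Hn; left; exact H|].
    destruct (Hout C2 HC2) as [j Hj]; [intros H; apply Hn; right; exact H|].
    destruct (Hfil i j) as [k [Hki Hkj]].
    apply (proj2 HA k). intros y Qy.
    destruct (Hi y (Hki y Qy)) as [H|[H|H1]]; [left; exact H|right; exact H|].
    destruct (Hj y (Hkj y Qy)) as [H|[H|H2]]; [left; exact H|right; exact H|].
    right. apply NNPP. intros nAy. destruct (Hcov y nAy); contradiction.
Qed.

End Maximal.

(* A maximal open set avoiding every [Q i] (modulo [U]) has an irreducible
   complement, whose generic point lies in every [Q i]. *)
Lemma filtered_inter_not_subset : ~ subset (fun y => forall i, Q i y) U.
Proof.
  intros HsubU.
  destruct (zorn_union_closed avoiding) as [A [HA Amax]].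
  { intros F FA Ftot. apply avoiding_chain_union; assumption. }
  destruct (Hsob _ (maximal_avoiding_compl_irreducible A HA Amax)) as [x [Hx _]].
  assert (nAx : ~ A x).
  { apply (proj2 (Hx x)). intros C _ HC. apply HC. reflexivity. }
  apply nAx, (maximal_avoiding_contains A HA Amax), HsubU. intros i.
  destruct (maximal_avoiding_meets A HA i) as [z [Qz nAz]].
  apply (HQs i z x Qz), (generic_point_above OY _ x z Hx nAz).
Qed.

End Avoiding.

Lemma sober_well_filtered U :
  OY U -> subset (fun y => forall i, Q i y) U -> exists i, subset (Q i) U.
Proof.
  intros HU HsubU. apply NNPP. intros Hno.
  apply (filtered_inter_not_subset U HU); [|exact HsubU].
  intros i Hi. apply Hno. exists i. exact Hi.
Qed.

Lemma filtered_inter_nonempty :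
  (forall i, nonempty (Q i)) -> nonempty (fun y => forall i, Q i y).
Proof.
  intros Hne. apply NNPP. intros Hempty.
  destruct (sober_well_filtered (fun _ => False)) as [i Hi]; [apply open_empty, Ht| |].
  - intros y Hy. apply Hempty. exists y. exact Hy.
  - destruct (Hne i) as [y Qy]. exact (Hi y Qy).
Qed.

Lemma filtered_inter_compact : compactset OY (fun y => forall i, Q i y).
Proof.
  intros F HF Hcov.
  destruct (sober_well_filtered (fun y => exists V, F V /\ V y)) as [i Hi].
  - apply open_union; assumption.
  - exact Hcov.
  - destruct (HQc i F HF Hi) as [l [Hl Hlcov]].
    exists l. split; [exact Hl|]. intros y Hy. apply Hlcov, Hy.
Qed.

Lemma filtered_inter_saturated : saturated OY (fun y => forall i, Q i y).
Proof. intros x y Hx Hxy i. apply (HQs i x y (Hx i) Hxy). Qed.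

End WellFiltered.
Definition subspace_image {Y : Type} {P : Y -> Prop} (Q : {y : Y | P y} -> Prop) (y : Y)
  : Prop := exists x : {y : Y | P y}, proj1_sig x = y /\ Q x.

Section Subspace.
Context {Y : Type} (OY : (Y -> Prop) -> Prop) (P : Y -> Prop).

Lemma subspace_compact_restrict K :
  compactset OY K -> subset K P -> compactset (subspace_top OY P) (fun x => K (proj1_sig x)).
Proof.
  intros HK HKP F HF Hcov.
  set (G := fun U => OY U /\ exists W, F W /\ forall x, W x <-> U (proj1_sig x)).
  destruct (HK G) as [l [Hl Hlcov]].
  - intros U [HU _]. exact HU.
  - intros y Ky. destruct (Hcov (exist _ y (HKP y Ky)) Ky) as [W [FW Wx]].
    destruct (HF W FW) as [U [HU HWU]].
    exists U. split; [split; [exact HU|exists W; auto]|apply (HWU (exist _ y (HKP y Ky))), Wx].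
  - destruct (list_choice (fun U W => F W /\ forall x, W x <-> U (proj1_sig x)) l)
      as [lW [A1 A2]].
    { intros U HU. apply (Hl U HU). }
    exists lW. split.
    + intros W HW. destruct (A1 W HW) as [U [_ [FW _]]]. exact FW.
    + intros x Kx. destruct (Hlcov (proj1_sig x) Kx) as [U [HU Ux]].
      destruct (A2 U HU) as [W [HW [_ HWU]]]. exists W. split; [exact HW|apply HWU, Ux].
Qed.

Lemma subspace_saturated_restrict K :
  saturated OY K -> saturated (subspace_top OY P) (fun x => K (proj1_sig x)).
Proof.
  intros HK x y Kx Hxy. apply (HK _ _ Kx). intros U HU Ux.
  apply (Hxy (fun z => U (proj1_sig z))); [exists U; split; [exact HU|tauto]|exact Ux].
Qed.

Lemma subspace_image_compact Q :
  compactset (subspace_top OY P) Q -> compactset OY (subspace_image Q).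
Proof.
  intros HQ F HF Hcov.
  destruct (HQ (fun W => exists U, F U /\ forall x, W x <-> U (proj1_sig x))) as [l [Hl Hlcov]].
  - intros W [U [FU HWU]]. exists U. split; [apply HF, FU|exact HWU].
  - intros x Qx. destruct (Hcov (proj1_sig x) (ex_intro _ x (conj eq_refl Qx))) as [U [FU Ux]].
    exists (fun z => U (proj1_sig z)). split; [exists U; split; [exact FU|tauto]|exact Ux].
  - destruct (list_choice (fun W U => F U /\ forall x, W x <-> U (proj1_sig x)) l)
      as [lU [A1 A2]].
    { intros W HW. apply (Hl W HW). }
    exists lU. split.
    + intros U HU. destruct (A1 U HU) as [W [_ [FU _]]]. exact FU.
    + intros y [x [<- Qx]]. destruct (Hlcov x Qx) as [W [HW Wx]].
      destruct (A2 W HW) as [U [HU [_ HWU]]]. exists U. split; [exact HU|apply HWU, Wx].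
Qed.

Lemma subspace_image_saturated Q :
  (forall y z, P y -> spec_le OY y z -> P z) ->
  saturated (subspace_top OY P) Q -> saturated OY (subspace_image Q).
Proof.
  intros HPup HQ y z [x [<- Qx]] Hyz.
  exists (exist _ z (HPup _ z (proj2_sig x) Hyz)). split; [reflexivity|].
  apply (HQ x _ Qx). intros W [U [HU HWU]] Wx. apply HWU, (Hyz U HU), HWU, Wx.
Qed.

End Subspace.

Section Mu.
Context {Y : Type} (OY : (Y -> Prop) -> Prop) (Ht : is_topology OY)
  (mu : Y -> R) (Hmu01 : forall y, 0 <= mu y <= 1)
  (Hmuopen : forall a, 0 <= a <= 1 -> OY (fun y => mu y < a)).

Lemma mu_sublevel_open a : OY (fun y => mu y < a).
Proof.
  destruct (Rle_lt_dec a 0) as [Ha|Ha].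
  - apply (open_ext OY (fun _ => False)); [apply open_empty, Ht|].
    intros y. specialize (Hmu01 y). split; [intros []|lra].
  - destruct (Rle_lt_dec a 1) as [Hb|Hb]; [apply Hmuopen; lra|].
    apply (open_ext OY (fun _ => True)); [apply open_full, Ht|].
    intros y. specialize (Hmu01 y). split; [lra|auto].
Qed.

Lemma spec_le_mu_zero y z : mu y = 0 -> spec_le OY y z -> mu z = 0.
Proof.
  intros Hy Hyz. destruct (Hmu01 z) as [Hz _]. apply Rle_antisym; [|exact Hz].
  apply Rnot_lt_le. intros Hpos.
  assert (Hlt := Hyz _ (mu_sublevel_open (mu z))). simpl in Hlt. lra.
Qed.

(* The sublevel sets [mu < a], [a < m], form a chain of opens covering [Q] if
   [m] is not attained, so compactness puts [Q] inside one of them. *)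
Lemma compact_has_max Q : nonempty Q -> compactset OY Q -> exists m, is_max_on mu Q m.
Proof.
  intros [y0 Qy0] HQ.
  destruct (completeness (fun r => exists y, Q y /\ r = mu y)) as [m [Hub Hlub]].
  { exists 1. intros r [y [_ ->]]. apply Hmu01. }
  { exists (mu y0). exists y0. auto. }
  assert (Hle : forall y, Q y -> mu y <= m) by (intros y Qy; apply Hub; exists y; auto).
  exists m. split; [|exact Hle].
  apply NNPP. intros Hno.
  assert (Hlt : forall y, Q y -> mu y < m).
  { intros y Qy. destruct (Rle_lt_or_eq_dec _ _ (Hle y Qy)) as [H|H]; [exact H|].
    destruct Hno. exists y. auto. }
  set (F := fun W => exists a, a < m /\ W = (fun y => mu y < a)).
  destruct (compact_directed_union OY Q F HQ) as [W [[a [Ham ->]] QW]].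
  - intros W [a [_ ->]]. apply mu_sublevel_open.
  - split; [exists (fun y => mu y < m - 1); exists (m - 1); split; [lra|reflexivity]|].
    intros W1 W2 [a1 [H1 ->]] [a2 [H2 ->]].
    exists (fun y => mu y < Rmax a1 a2). split; [exists (Rmax a1 a2); split; [apply Rmax_lub_lt; auto|reflexivity]|].
    split; intros y Hy; [apply (Rlt_le_trans _ _ _ Hy (Rmax_l a1 a2))|apply (Rlt_le_trans _ _ _ Hy (Rmax_r a1 a2))].
  - intros y Qy. specialize (Hlt y Qy).
    exists (fun z => mu z < (mu y + m) / 2). split; [exists ((mu y + m) / 2); split; [lra|reflexivity]|simpl; lra].
  - assert (m <= a); [|lra].
    apply Hlub. intros r [y [Qy ->]]. left. apply QW, Qy.
Qed.

Lemma rmax_is_max Q : nonempty Q -> compactset OY Q -> is_max_on mu Q (rmax mu Q).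
Proof. intros Hne HQ. unfold rmax. apply epsilon_spec, compact_has_max; assumption. Qed.

Lemma filtered_inter_mu_zero (I : Type) (Q : I -> Y -> Prop) :
  (forall i, nonempty (Q i) /\ compactset OY (Q i)) ->
  is_inf_fam (fun i => rmax mu (Q i)) 0 ->
  forall y, (forall i, Q i y) -> mu y = 0.
Proof.
  intros HQ [_ Hinf] y Hy. destruct (Hmu01 y) as [Hy0 _].
  apply NNPP. intros Hne.
  destruct (Hinf (mu y)) as [i Hi]; [lra|].
  destruct (rmax_is_max (Q i)) as [_ Hmax]; try apply HQ.
  specialize (Hmax y (Hy i)). simpl in Hi. lra.
Qed.

Section NbhdBase.
Variables (I : Type) (K : I -> Y -> Prop) (S : Y -> Prop).
Hypotheses (HKint : forall i, subset S (tinterior OY (K i)))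
  (HKbase : forall U, OY U -> subset S U -> exists i, subset (K i) U).

Lemma nbhd_base_filtered : filtered K.
Proof.
  split.
  - destruct (HKbase (fun _ => True)) as [i _]; [apply open_full, Ht|intros ? ?; exact Logic.I|].
    constructor. exact i.
  - intros i j.
    destruct (HKbase (fun y => tinterior OY (K i) y /\ tinterior OY (K j) y)) as [k Hk].
    + apply open_inter; [exact Ht|apply open_tinterior, Ht|apply open_tinterior, Ht].
    + intros y Sy. split; apply HKint, Sy.
    + exists k. split; intros y Hy; apply (tinterior_subset OY), (Hk y Hy).
Qed.

Lemma nbhd_base_inter_eq :
  saturated OY S -> forall y, (forall i, K i y) <-> S y.
Proof.
  intros HS y. split.
  - intros Hy. apply NNPP. intros nSy.
    destruct (saturated_open_separation OY Ht S y HS nSy) as [V [HV [SV nVy]]].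
    destruct (HKbase V HV SV) as [i Hi]. exact (nVy (Hi y (Hy i))).
  - intros Sy i. apply (tinterior_subset OY), HKint, Sy.
Qed.

Lemma nbhd_base_inter_interior_eq :
  saturated OY S -> forall y, (forall i, tinterior OY (K i) y) <-> S y.
Proof.
  intros HS y. split.
  - intros Hy. apply (nbhd_base_inter_eq HS). intros i. apply (tinterior_subset OY), Hy.
  - intros Sy i. apply HKint, Sy.
Qed.

Lemma nbhd_base_rmax_inf :
  (forall i, nonempty (K i) /\ compactset OY (K i)) -> (forall y, S y -> mu y = 0) ->
  is_inf_fam (fun i => rmax mu (K i)) 0.
Proof.
  intros HK HS. split.
  - intros i. destruct (rmax_is_max (K i)) as [[y [_ <-]] _]; try apply HK. apply Hmu01.
  - intros e He. destruct (HKbase (fun y => mu y < e)) as [i Hi].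
    + apply mu_sublevel_open.
    + intros y Sy. rewrite (HS y Sy). exact He.
    + exists i. destruct (rmax_is_max (K i)) as [[y [Ky <-]] _]; try apply HK.
      specialize (Hi y Ky). simpl in Hi. lra.
Qed.

Lemma nbhd_base_represents :
  (forall i, nonempty (K i) /\ compactset OY (K i)) ->
  saturated OY S -> (forall y, S y -> mu y = 0) ->
  filtered K /\ is_inf_fam (fun i => rmax mu (K i)) 0 /\
  (forall y, (forall i, K i y) <-> S y) /\
  (forall y, (forall i, tinterior OY (K i) y) <-> S y).
Proof.
  intros HK HS HS0. split; [exact nbhd_base_filtered|split; [exact (nbhd_base_rmax_inf HK HS0)|]].
  split; [exact (nbhd_base_inter_eq HS)|exact (nbhd_base_inter_interior_eq HS)].
Qed.

End NbhdBase.

Lemma zero_set_subspace_image (Q : {y : Y | mu y = 0} -> Prop) :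
  nonempty Q -> compactset (subspace_top OY (fun y => mu y = 0)) Q ->
  saturated (subspace_top OY (fun y => mu y = 0)) Q ->
  nonempty (subspace_image Q) /\ compactset OY (subspace_image Q) /\
  saturated OY (subspace_image Q) /\ (forall y, subspace_image Q y -> mu y = 0).
Proof.
  intros [x Qx] HQc HQs. split; [exists (proj1_sig x), x; auto|split; [|split]].
  - apply subspace_image_compact, HQc.
  - apply subspace_image_saturated; [exact spec_le_mu_zero|exact HQs].
  - intros y [x' [<- _]]. exact (proj2_sig x').
Qed.
End Mu.
Definition compact_saturated_nbhd {Y : Type} (OY : (Y -> Prop) -> Prop) (S K : Y -> Prop)
  : Prop := nonempty K /\ compactset OY K /\ saturated OY K /\ subset S (tinterior OY K).

Lemma locally_compact_nbhd_inside {Y : Type} (OY : (Y -> Prop) -> Prop) (S U : Y -> Prop) :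
  locally_compact OY -> compactset OY S -> nonempty S -> OY U -> subset S U ->
  exists K, compact_saturated_nbhd OY S K /\ subset K U.
Proof.
  intros Hlc HS [s0 Ss0] HU HSU.
  destruct (HS (fun V => OY V /\ exists K, subset V K /\ subset K U /\ compactset OY K))
    as [l [Hl Hlcov]].
  { intros V [HV _]. exact HV. }
  { intros x Sx. destruct (Hlc x U HU (HSU x Sx)) as [V [K [HV [Vx [VK [KU cK]]]]]].
    exists V. split; [split; [exact HV|exists K; auto]|exact Vx]. }
  destruct (list_choice (fun V K => subset V K /\ subset K U /\ compactset OY K) l)
    as [lK [H1 H2]].
  { intros V HV. apply (Hl V HV). }
  set (K0 := fun y => exists K, In K lK /\ K y).
  assert (HVK0 : forall x, S x -> exists V, OY V /\ subset V K0 /\ V x).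
  { intros x Sx. destruct (Hlcov x Sx) as [V [HV Vx]].
    destruct (H2 V HV) as [K [HK [VK _]]].
    exists V. split; [apply (Hl V HV)|split; [|exact Vx]].
    intros y Vy. exists K. split; [exact HK|apply VK, Vy]. }
  exists (fun y => exists x, K0 x /\ spec_le OY x y). split; [split; [|split; [|split]]|].
  - destruct (HVK0 s0 Ss0) as [V [_ [VK0 Vs0]]].
    exists s0, s0. split; [apply VK0, Vs0|intros W _ H; exact H].
  - apply compact_upclosure, compact_list_union. intros K HK.
    destruct (H1 K HK) as [V [_ [_ [_ cK]]]]. exact cK.
  - intros x y [z [Kz Hzx]] Hxy. exists z. split; [exact Kz|apply (spec_le_trans OY z x y Hzx Hxy)].
  - intros x Sx. destruct (HVK0 x Sx) as [V [HV [VK0 Vx]]].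
    exists V. split; [exact HV|split; [|exact Vx]].
    intros y Vy. exists y. split; [apply VK0, Vy|intros W _ H; exact H].
  - intros y [x [[K [HK Kx]] Hxy]]. destruct (H1 K HK) as [V [_ [_ [KU _]]]].
    apply (Hxy U HU), KU, Kx.
Qed.

Section ContinuousDcpo.
Context {Y : Type} (OY : (Y -> Prop) -> Prop) (le : Y -> Y -> Prop)
  (Hcd : continuous_dcpo le) (Hsc : forall U, OY U <-> scott_open le U).

Let le_refl : forall x, le x x.
Proof. apply Hcd. Qed.
Let le_trans : forall x y z, le x y -> le y z -> le x z.
Proof. apply Hcd. Qed.

Lemma way_below_le a y : way_below le a y -> le a y.
Proof.
  intros H. destruct (H (fun z => z = y) y) as [d [-> Hd]].
  - split; [exists y; reflexivity|]. intros x z -> ->. exists y. auto.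
  - split; [intros d ->; apply le_refl|intros u Hu; apply Hu; reflexivity].
  - apply le_refl.
  - exact Hd.
Qed.

Lemma way_below_le_trans a b c : way_below le a b -> le b c -> way_below le a c.
Proof. intros H Hbc D s HD Hs Hcs. apply (H D s HD Hs), (le_trans _ _ _ Hbc Hcs). Qed.

Lemma le_way_below_trans a b c : le a b -> way_below le b c -> way_below le a c.
Proof.
  intros Hab H D s HD Hs Hcs. destruct (H D s HD Hs Hcs) as [d [Dd Hd]].
  exists d. split; [exact Dd|apply (le_trans _ _ _ Hab Hd)].
Qed.

Lemma scott_open_up U x y : OY U -> U x -> le x y -> U y.
Proof. intros HU. apply (proj1 (Hsc U) HU). Qed.

Lemma spec_le_le x y : spec_le OY x y -> le x y.
Proof.
  intros H. apply NNPP. intros Hn.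
  assert (Ho : OY (fun z => ~ le z y)).
  { apply Hsc. split.
    - intros a b Ha Hab Hb. apply Ha, (le_trans _ _ _ Hab Hb).
    - intros D s HD Hs Hns. apply NNPP. intros Hno. apply Hns, (proj2 Hs).
      intros d Dd. apply NNPP. intros Hd. apply Hno. exists d. auto. }
  apply (H _ Ho Hn), le_refl.
Qed.

(* Interpolation: the elements way below some [d] in [D] form a directed set
   with the same supremum as [D]. *)
Lemma way_below_open a : OY (fun y => way_below le a y).
Proof.
  apply Hsc. split; [intros x y Hx Hxy; apply (way_below_le_trans _ _ _ Hx Hxy)|].
  intros D s HD Hs Has.
  set (D' := fun w => exists d, D d /\ way_below le w d).
  assert (HD' : directed le D').
  { split.
    - destruct HD as [[d0 Dd0] _]. destruct (proj2 Hcd d0) as [[[w Hw] _] _].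
      exists w, d0. auto.
    - intros w1 w2 [d1 [D1 H1]] [d2 [D2 H2]].
      destruct (proj2 HD d1 d2 D1 D2) as [d3 [D3 [L1 L2]]].
      destruct (proj1 (proj2 Hcd d3)) as [_ Hdir].
      destruct (Hdir w1 w2 (way_below_le_trans _ _ _ H1 L1) (way_below_le_trans _ _ _ H2 L2))
        as [w3 [W3 [M1 M2]]].
      exists w3. split; [exists d3; auto|auto]. }
  assert (Hs' : is_sup le D' s).
  { split.
    - intros w [d [Dd Hw]]. apply (le_trans _ d); [apply way_below_le, Hw|apply (proj1 Hs), Dd].
    - intros u Hu. apply (proj2 Hs). intros d Dd.
      apply (proj2 (proj2 (proj2 Hcd d))). intros w Hw. apply Hu. exists d. auto. }
  destruct (Has D' s HD' Hs' (le_refl s)) as [w [[d [Dd Hwd]] Haw]].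
  exists d. split; [exact Dd|apply (le_way_below_trans _ _ _ Haw Hwd)].
Qed.

Lemma open_way_below_approx U x : OY U -> U x -> exists a, way_below le a x /\ U a.
Proof.
  intros HU Ux. destruct (proj2 Hcd x) as [Hdir Hsup].
  destruct (proj2 (proj1 (Hsc U) HU) _ x Hdir Hsup Ux) as [a [Ha Ua]].
  exists a. auto.
Qed.

Lemma upset_compact A : compactset OY (upset le A).
Proof.
  intros F HF Hc.
  destruct (list_choice (fun a U => F U /\ U a) A) as [l [H1 H2]].
  { intros a Ha. apply (Hc a). exists a. split; [exact Ha|apply le_refl]. }
  exists l. split.
  - intros U HU. destruct (H1 U HU) as [a [_ [FU _]]]. exact FU.
  - intros y [a [Ha Hay]]. destruct (H2 a Ha) as [U [HU [FU Ua]]].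
    exists U. split; [exact HU|apply (scott_open_up U a y); auto].
Qed.

Lemma upset_saturated A : saturated OY (upset le A).
Proof.
  intros x y [a [Ha Hax]] Hxy. exists a. split; [exact Ha|].
  apply (le_trans _ x); [exact Hax|apply spec_le_le, Hxy].
Qed.

Lemma upset_nonempty A : A <> nil -> nonempty (upset le A).
Proof.
  destruct A as [|a A]; [intros H; contradiction H; reflexivity|].
  intros _. exists a, a. split; [left; reflexivity|apply le_refl].
Qed.

Lemma compact_finite_upset_nbhd_inside (S U : Y -> Prop) :
  compactset OY S -> nonempty S -> OY U -> subset S U ->
  exists A, A <> nil /\ subset S (tinterior OY (upset le A)) /\ subset (upset le A) U.
Proof.
  intros HS [s0 Ss0] HU HSU.
  destruct (HS (fun W => exists a, U a /\ W = (fun y => way_below le a y))) as [l [Hl Hlcov]].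
  { intros W [a [_ ->]]. apply way_below_open. }
  { intros x Sx. destruct (open_way_below_approx U x HU (HSU x Sx)) as [a [Hax Ua]].
    exists (fun y => way_below le a y). split; [exists a; auto|exact Hax]. }
  destruct (list_choice (fun W a => U a /\ W = (fun y => way_below le a y)) l Hl)
    as [la [H1 H2]].
  exists la. split; [|split].
  - destruct (Hlcov s0 Ss0) as [W [HW _]]. destruct (H2 W HW) as [a [Ha _]].
    destruct la; [destruct Ha|discriminate].
  - intros x Sx. destruct (Hlcov x Sx) as [W [HW Wx]].
    destruct (H2 W HW) as [a [Ha [_ ->]]].
    exists (fun y => way_below le a y). split; [apply way_below_open|split; [|exact Wx]].
    intros y Hy. exists a. split; [exact Ha|apply way_below_le, Hy].
  - intros y [a [Ha Hay]]. destruct (H1 a Ha) as [W [_ [Ua _]]].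
    apply (scott_open_up U a y); auto.
Qed.

End ContinuousDcpo.
Section ZeroSet.
Context {Y : Type} (OY : (Y -> Prop) -> Prop)
  (HtopY : is_topology OY) (Hsober : sober OY) (Hlc : locally_compact OY)
  (mu : Y -> R) (Hmu01 : forall y, 0 <= mu y <= 1)
  (Hmuopen : forall a, 0 <= a <= 1 -> OY (fun y => mu y < a)).

Let X := {y : Y | mu y = 0}.
Let OX := subspace_top OY (fun y => mu y = 0).

Lemma filtered_inter_zero_set (I : Type) (Q : I -> Y -> Prop) :
  filtered Q ->
  (forall i, nonempty (Q i) /\ compactset OY (Q i) /\ saturated OY (Q i)) ->
  is_inf_fam (fun i => rmax mu (Q i)) 0 ->
  (forall y, (forall i, Q i y) -> mu y = 0) /\
  nonempty (fun x : X => forall i, Q i (proj1_sig x)) /\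
  compactset OX (fun x : X => forall i, Q i (proj1_sig x)) /\
  saturated OX (fun x : X => forall i, Q i (proj1_sig x)).
Proof.
  intros Hfil HQ Hinf.
  assert (HQc : forall i, compactset OY (Q i)) by apply HQ.
  assert (HQs : forall i, saturated OY (Q i)) by apply HQ.
  assert (H0 := filtered_inter_mu_zero OY HtopY mu Hmu01 Hmuopen I Q
                  (fun i => conj (proj1 (HQ i)) (HQc i)) Hinf).
  split; [exact H0|split; [|split]].
  - destruct (filtered_inter_nonempty OY HtopY Hsober I Q Hfil HQc HQs (fun i => proj1 (HQ i)))
      as [y Hy].
    exists (exist _ y (H0 y Hy)). exact Hy.
  - apply (subspace_compact_restrict OY _ (fun y => forall i, Q i y)); [|exact H0].
    exact (filtered_inter_compact OY HtopY Hsober I Q Hfil HQc HQs).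
  - apply (subspace_saturated_restrict OY _ (fun y => forall i, Q i y)).
    exact (filtered_inter_saturated OY I Q HQs).
Qed.

Lemma zero_set_compact_nbhd_base (Q : X -> Prop) :
  nonempty Q -> compactset OX Q -> saturated OX Q ->
  exists (I : Type) (Qi : I -> Y -> Prop),
    filtered Qi /\
    (forall i, nonempty (Qi i) /\ compactset OY (Qi i) /\ saturated OY (Qi i)) /\
    is_inf_fam (fun i => rmax mu (Qi i)) 0 /\
    (forall y, (forall i, Qi i y) <-> subspace_image Q y) /\
    (forall y, (forall i, tinterior OY (Qi i) y) <-> subspace_image Q y).
Proof.
  intros Hne Hc Hs.
  destruct (zero_set_subspace_image OY HtopY mu Hmu01 Hmuopen Q Hne Hc Hs)
    as [Sne [Sc [Ss S0]]].
  set (Good := compact_saturated_nbhd OY (subspace_image Q)).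
  exists {K | Good K}, (@proj1_sig _ Good).
  assert (HK : forall i : {K | Good K},
             nonempty (proj1_sig i) /\ compactset OY (proj1_sig i) /\ saturated OY (proj1_sig i))
    by (intros i; destruct (proj2_sig i) as [Kne [Kc [Ks _]]]; auto).
  destruct (nbhd_base_represents OY HtopY mu Hmu01 Hmuopen _ (@proj1_sig _ Good)
              (subspace_image Q)) as [Gfil [Ginf [Ginter Gint]]]; try assumption.
  - intros i. apply (proj2_sig i).
  - intros U HU HSU.
    destruct (locally_compact_nbhd_inside OY _ U Hlc Sc Sne HU HSU) as [K [GK HKU]].
    exists (exist _ K GK). exact HKU.
  - intros i. split; apply HK.
  - split; [exact Gfil|split; [exact HK|auto]].
Qed.

Lemma zero_set_compact_finite_upset_base (le : Y -> Y -> Prop) :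
  continuous_dcpo le -> (forall U, OY U <-> scott_open le U) ->
  forall Q : X -> Prop, nonempty Q -> compactset OX Q -> saturated OX Q ->
  exists (I : Type) (Qi : I -> Y -> Prop) (Ai : I -> list Y),
    filtered Qi /\
    (forall i, nonempty (Qi i) /\ compactset OY (Qi i) /\ saturated OY (Qi i)) /\
    (forall i, Ai i <> nil /\ forall y, Qi i y <-> upset le (Ai i) y) /\
    is_inf_fam (fun i => rmax mu (Qi i)) 0 /\
    (forall y, (forall i, Qi i y) <-> subspace_image Q y) /\
    (forall y, (forall i, tinterior OY (Qi i) y) <-> subspace_image Q y).
Proof.
  intros Hcd Hsc Q Hne Hc Hs.
  destruct (zero_set_subspace_image OY HtopY mu Hmu01 Hmuopen Q Hne Hc Hs)
    as [Sne [Sc [Ss S0]]].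
  set (Good := fun A => A <> nil /\ subset (subspace_image Q) (tinterior OY (upset le A))).
  exists {A | Good A}, (fun i => upset le (proj1_sig i)), (@proj1_sig _ Good).
  assert (HK : forall i : {A | Good A}, nonempty (upset le (proj1_sig i)) /\
             compactset OY (upset le (proj1_sig i)) /\ saturated OY (upset le (proj1_sig i))).
  { intros i. split; [apply (upset_nonempty le Hcd), (proj2_sig i)|split].
    - apply (upset_compact OY le Hcd Hsc).
    - apply (upset_saturated OY le Hcd Hsc). }
  destruct (nbhd_base_represents OY HtopY mu Hmu01 Hmuopen _
              (fun i : {A | Good A} => upset le (proj1_sig i)) (subspace_image Q))
    as [Gfil [Ginf [Ginter Gint]]]; try assumption.
  - intros i. apply (proj2_sig i).
  - intros U HU HSU.
    destruct (compact_finite_upset_nbhd_inside OY le Hcd Hsc _ U Sc Sne HU HSU)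
      as [A [HA1 [HA2 HA3]]].
    exists (exist _ A (conj HA1 HA2)). exact HA3.
  - intros i. split; apply HK.
  - split; [exact Gfil|split; [exact HK|split; [|auto]]].
    intros i. split; [apply (proj2_sig i)|tauto].
Qed.

End ZeroSet.

Theorem theorem17p3
  (Y : Type) (OY : (Y -> Prop) -> Prop)
  (HtopY : is_topology OY) (Hsober : sober OY) (Hlc : locally_compact OY)
  (mu : Y -> R) (Hmu01 : forall y, 0 <= mu y <= 1)
  (Hmuopen : forall a, 0 <= a <= 1 -> OY (fun y => mu y < a)) :
  let X := {y : Y | mu y = 0} in
  let OX := subspace_top OY (fun y => mu y = 0) in
  (forall Q : Y -> Prop, nonempty Q -> compactset OY Q -> saturated OY Q ->
     is_max_on mu Q (rmax mu Q)) /\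
  (forall (I : Type) (Q : I -> Y -> Prop),
     filtered Q ->
     (forall i, nonempty (Q i) /\ compactset OY (Q i) /\ saturated OY (Q i)) ->
     is_inf_fam (fun i => rmax mu (Q i)) 0 ->
     (forall y, (forall i, Q i y) -> mu y = 0) /\
     nonempty (fun x : X => forall i, Q i (proj1_sig x)) /\
     compactset OX (fun x : X => forall i, Q i (proj1_sig x)) /\
     saturated OX (fun x : X => forall i, Q i (proj1_sig x))) /\
  (forall Q : X -> Prop, nonempty Q -> compactset OX Q -> saturated OX Q ->
     exists (I : Type) (Qi : I -> Y -> Prop),
       filtered Qi /\
       (forall i, nonempty (Qi i) /\ compactset OY (Qi i) /\ saturated OY (Qi i)) /\
       is_inf_fam (fun i => rmax mu (Qi i)) 0 /\
       (forall y, (forall i, Qi i y) <-> exists x : X, proj1_sig x = y /\ Q x) /\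
       (forall y, (forall i, tinterior OY (Qi i) y) <->
                  exists x : X, proj1_sig x = y /\ Q x)) /\
  (forall le : Y -> Y -> Prop, continuous_dcpo le ->
     (forall U, OY U <-> scott_open le U) ->
     forall Q : X -> Prop, nonempty Q -> compactset OX Q -> saturated OX Q ->
     exists (I : Type) (Qi : I -> Y -> Prop) (Ai : I -> list Y),
       filtered Qi /\
       (forall i, nonempty (Qi i) /\ compactset OY (Qi i) /\ saturated OY (Qi i)) /\
       (forall i, Ai i <> nil /\ forall y, Qi i y <-> upset le (Ai i) y) /\
       is_inf_fam (fun i => rmax mu (Qi i)) 0 /\
       (forall y, (forall i, Qi i y) <-> exists x : X, proj1_sig x = y /\ Q x) /\
       (forall y, (forall i, tinterior OY (Qi i) y) <->
                  exists x : X, proj1_sig x = y /\ Q x)).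
Proof.
  intros X OX.
  split; [|split; [|split]].
  - intros Q Hne Hc _. exact (rmax_is_max OY HtopY mu Hmu01 Hmuopen Q Hne Hc).
  - exact (filtered_inter_zero_set OY HtopY Hsober mu Hmu01 Hmuopen).
  - exact (zero_set_compact_nbhd_base OY HtopY Hlc mu Hmu01 Hmuopen).
  - exact (zero_set_compact_finite_upset_base OY HtopY mu Hmu01 Hmuopen).
Qed.
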